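(* Let $\vec k$ be a vector of positive integers with $\ell(\vec k)=1$ or $\ell(\vec k)=2$. Then $\mathrm{depth}(\pi)=\mathrm{bounce}(\pi)$ for every $\pi\in\mathcal D_{\vec k}$. In particular, $$\sum_{\pi\in\mathcal D_{\vec k}}q^{\mathrm{area}(\pi)}t^{\mathrm{depth}(\pi)}=\sum_{\pi\in\mathcal D_{\vec k}}q^{\mathrm{area}(\pi)}t^{\mathrm{bounce}(\pi)}.$$
   Context: For $\vec k=(k_1,\dots,k_\ell)$ put $|\vec k|=\sum k_i$, $N=|\vec k|+\ell$. A $\vec k$-Dyck path is a word $\pi=\pi_1\cdots\pi_N$ containing the letters $S^{k_1},\dots,S^{k_\ell}$ exactly once each and in this order, together with $|\vec k|$ letters $W$, such that all starting ranks are nonnegative, where $r_1=0$, $r_{i+1}=r_i+k_j$ if $\pi_i=S^{k_j}$ and $r_{i+1}=r_i-1$ if $\pi_i=W$. $\mathcal D_{\vec k}$ is the set of such paths. $\mathrm{area}(\pi)=\sum_j a_j$ where $a_j$ is the starting rank of $S^{k_j}$. Filling algorithms: in a tableau of $\ell$ top-justified columns, column $i$ having $k_i+1$ cells, place $1$ at the top of column 1; for $i=2,\dots,N$, call an entry active if it is currently the bottom entry of a column $i'$ not yet containing $k_{i'}+1$ entries; if $\pi_i=W$ place $i$ immediately below the smallest active entry (algorithm $\eta$) resp. the largest active entry (algorithm $\eta_*$); otherwise place $i$ at the top of the first empty column. Ranking: for a filled tableau $F$, column 1 gets ranks $0,\dots,k_1$ top to bottom; for $i\ge2$, if the top entry of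 column $i$ of $F$ is $A+1$ and $A$ has rank $\alpha$, column $i$ gets ranks $\alpha,\dots,\alpha+k_i$ top to bottom. $\mathrm{bounce}(\pi)$ is the sum of the first-row ranks for $F=\eta(\pi)$, and $\mathrm{depth}(\pi)$ is the sum of the first-row ranks for $F=\eta_*(\pi)$. *)

From mathcomp Require Import all_boot all_order all_algebra.
Set Implicit Arguments. Unset Strict Implicit. Unset Printing Implicit Defensive.
Import GRing.Theory Num.Theory.

(* A word pi = pi_1 ... pi_N is encoded as a seq bool: [true] at position i
   means pi_i is the next (in order) letter S^{k_j}, [false] means W.
   Since the S^{k_j} occur exactly once each and in the order j = 1..l,
   the word is determined by the positions of its S letters. *)

Fixpoint start_ranks_from (k : seq nat) (r : int) (w : seq bool) : seq int :=
  match w with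
  | [::] => [::]
  | b :: w' =>
      if b then r :: start_ranks_from (behead k) (r + (head 0%N k)%:Z) w'
      else r :: start_ranks_from k (r - 1) w'
  end.

Definition start_ranks (k : seq nat) (w : seq bool) : seq int :=
  start_ranks_from k 0 w.

Definition is_kdyck (k : seq nat) (w : seq bool) : bool :=
  [&& size w == (sumn k + size k)%N, count id w == size k
    & all (fun r : int => (0 <= r)%R) (start_ranks k w)].

Fixpoint words (n : nat) : seq (seq bool) :=
  if n is n'.+1 then [seq b :: w | b <- [:: true; false], w <- words n']
  else [:: [::]].

Definition kdyck_paths (k : seq nat) : seq (seq bool) :=
  [seq w <- words (sumn k + size k) | is_kdyck k w].

Definition area (k : seq nat) (w : seq bool) : nat :=
  sumn [seq absz p.1 | p <- zip (start_ranks k w) w & p.2].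

(* A tableau is a list of l columns, each listed top to bottom;
   column j has capacity k_j + 1. *)

Definition place_top (cols : seq (seq nat)) (i : nat) : seq (seq nat) :=
  set_nth [::] cols (find (fun c => c == [::]) cols) [:: i].

Definition active (k : seq nat) (cols : seq (seq nat)) : seq nat :=
  [seq last 0%N p.1 | p <- zip cols k & (p.1 != [::]) && (size p.1 < p.2.+1)].

Definition place_below (k : seq nat) (cols : seq (seq nat)) (a i : nat)
  : seq (seq nat) :=
  [seq (if [&& p.1 != [::], size p.1 < p.2.+1 & last 0%N p.1 == a]
        then rcons p.1 i else p.1) | p <- zip cols k].

Definition fill_step (choose : seq nat -> nat) (k : seq nat)
  (cols : seq (seq nat)) (ib : nat * bool) : seq (seq nat) :=
  let: (i, b) := ib in
  if i == 1%N then place_top cols 1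
  else if b then place_top cols i
  else match active k cols with
       | [::] => cols
       | act => place_below k cols (choose act) i
       end.

Definition fill (choose : seq nat -> nat) (k : seq nat) (w : seq bool)
  : seq (seq nat) :=
  foldl (fill_step choose k) (nseq (size k) [::]) (zip (iota 1 (size w)) w).

Definition min_seq (s : seq nat) : nat := foldr minn (head 0%N s) s.
Definition max_seq (s : seq nat) : nat := foldr maxn 0%N s.

Definition eta (k : seq nat) (w : seq bool) := fill min_seq k w.
Definition eta_star (k : seq nat) (w : seq bool) := fill max_seq k w.

(* rank of entry a, given the ranks [tops] of the top cells of the columns
   already ranked *)
Definition entry_rank (cols : seq (seq nat)) (tops : seq nat) (a : nat) : nat :=
  let c := find (fun col => a \in col) cols in
  (nth 0 tops c + index a (nth [::] cols c))%N.

Definition top_ranks (cols : seq (seq nat)) : seq nat :=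
  foldl (fun tops col =>
           rcons tops (if tops is [::] then 0%N
                       else entry_rank cols tops (head 0%N col).-1))
        [::] cols.

Definition first_row_rank_sum (F : seq (seq nat)) : nat := sumn (top_ranks F).

Definition bounce (k : seq nat) (w : seq bool) : nat :=
  first_row_rank_sum (eta k w).
Definition depth (k : seq nat) (w : seq bool) : nat :=
  first_row_rank_sum (eta_star k w).

From mathcomp Require Import all_boot all_order all_algebra.
Import GRing.Theory.

(* With at most two columns, the filling algorithms eta and eta_* can only
   disagree after the last letter S: before it only the first column is open,
   so there is at most one active entry.  After it, every letter W merely
   appends an entry larger than all previous ones to the bottom of a nonempty
   column.  This changes neither the top entries nor the position of any entry
   whose rank the ranking reads (the predecessors of the top entries), so the
   first-row ranks are already fixed when the last S is placed. *)

Set Implicit Arguments.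
Unset Strict Implicit.
Unset Printing Implicit Defensive.

Definition appends_to (j : nat) (cols cols' : seq (seq nat)) : bool :=
  all2 (fun c c' => (c' == c) || (c != [::]) && (c' == rcons c j)) cols cols'.

(* Column [i > 1] is ranked from the rank of the entry (top of column [i]) - 1. *)
Definition top_preds (cols : seq (seq nat)) : seq nat :=
  [seq (head 0 c).-1 | c <- cols].

Definition fill_from (choose : seq nat -> nat) (k : seq nat)
    (cols : seq (seq nat)) (m : nat) (w : seq bool) : seq (seq nat) :=
  foldl (fill_step choose k) cols (zip (iota m (size w)) w).

Definition top_rank_step (F : seq (seq nat)) (tops : seq nat) (col : seq nat) :=
  rcons tops (if tops is [::] then 0 else entry_rank F tops (head 0 col).-1).

Lemma top_ranksE F : top_ranks F = foldl (top_rank_step F) [::] F.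
Proof. by []. Qed.

Section AppendsTo.

Variable j : nat.

Lemma appends_to_refl cols : appends_to j cols cols.
Proof. by elim: cols => //= c cols ->; rewrite eqxx. Qed.

Lemma appends_to_size cols cols' : appends_to j cols cols' -> size cols' = size cols.
Proof. by rewrite /appends_to all2E => /andP[/eqP]. Qed.

Lemma appends_to_heads cols cols' :
  appends_to j cols cols' -> map (head 0) cols' = map (head 0) cols.
Proof.
elim: cols cols' => [|c cols IH] [|c' cols'] //= /andP[+ /IH ->].
by case/orP=> [/eqP -> | /andP[]]; last by case: c => // x s _ /eqP ->.
Qed.

Lemma appends_to_count_nonempty cols cols' : appends_to j cols cols' ->
  count (fun c => c != [::]) cols' = count (fun c => c != [::]) cols.
Proof.
elim: cols cols' => [|c cols IH] [|c' cols'] //= /andP[+ /IH ->].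
by case/orP=> [/eqP -> | /andP[]]; last by case: c => // x s _ /eqP ->.
Qed.

Lemma entry_rank_appends cols cols' tops a : a != j ->
  appends_to j cols cols' -> entry_rank cols' tops a = entry_rank cols tops a.
Proof.
move=> aj; rewrite /entry_rank.
elim: cols cols' tops => [|c cols IH] [|c' cols'] //= tops /andP[cc' app].
have mem_c' : (a \in c') = (a \in c).
  by case/orP: cc' => [/eqP -> | /andP[_ /eqP ->]] //; rewrite mem_rcons in_cons (negbTE aj).
rewrite mem_c'; case: ifP => a_c /=.
  case/orP: cc' => [/eqP -> | /andP[_ /eqP ->]] //.
  by rewrite -cats1 index_cat a_c.
by rewrite -!nth_behead IH.
Qed.

Lemma top_ranks_appends cols cols' : j \notin top_preds cols ->
  appends_to j cols cols' -> top_ranks cols' = top_ranks cols.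
Proof.
move=> j_top app; rewrite !top_ranksE.
suff gen s s' tops : appends_to j s s' -> j \notin top_preds s ->
    foldl (top_rank_step cols') tops s' = foldl (top_rank_step cols) tops s.
  exact: gen.
elim: s s' tops => [|c s IH] [|c' s'] tops //= /andP[cc' app'].
rewrite in_cons negb_or => /andP[jc js]; rewrite IH //; congr (foldl _ _ s).
have /= [head_c'] : map (head 0) [:: c'] = map (head 0) [:: c].
  by apply: appends_to_heads; rewrite /appends_to /= cc'.
by rewrite /top_rank_step head_c' (entry_rank_appends tops _ app) // eq_sym.
Qed.

Lemma place_below_appends k cols a : size cols <= size k ->
  appends_to j cols (place_below k cols a j).
Proof.
elim: cols k => [|c cols IH] [|k1 k] //= le_size.
rewrite IH // andbT; case: ifP => [/and3P[-> _ _] | _]; by rewrite eqxx ?orbT.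
Qed.

Lemma fill_step_W_appends ch k cols : j != 1 -> size cols <= size k ->
  appends_to j cols (fill_step ch k cols (j, false)).
Proof.
move=> /negbTE j1 le_size; rewrite /fill_step j1.
by case: (active k cols) => [|x act]; [exact: appends_to_refl | exact: place_below_appends].
Qed.

End AppendsTo.

Lemma size_active k cols : size (active k cols) <= count (fun c => c != [::]) cols.
Proof.
rewrite /active size_map size_filter.
elim: cols k => [|c cols IH] [|k1 k] //=.
apply: leq_add; last exact: IH.
by case: c => // x s; rewrite leq_b1.
Qed.

Lemma fill_step_W_choice_free ch1 ch2 k cols j :
  (forall x, ch1 [:: x] = ch2 [:: x]) -> size (active k cols) <= 1 ->
  fill_step ch1 k cols (j, false) = fill_step ch2 k cols (j, false).
Proof.
move=> ch12; rewrite /fill_step.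
by case: (active k cols) => [|x [|y act]] //= _; rewrite ch12.
Qed.

Lemma fill_step_S ch k cols i : fill_step ch k cols (i, true) = place_top cols i.
Proof. by rewrite /fill_step; case: eqP => // ->. Qed.

Lemma fill_fill_from ch k w : fill ch k w = fill_from ch k (nseq (size k) [::]) 1 w.
Proof. by []. Qed.

Lemma fill_from_cons ch k cols m b w :
  fill_from ch k cols m (b :: w) = fill_from ch k (fill_step ch k cols (m, b)) m.+1 w.
Proof. by []. Qed.

Lemma fill_from_cat ch k cols m u v :
  fill_from ch k cols m (u ++ v) = fill_from ch k (fill_from ch k cols m u) (m + size u) v.
Proof. by rewrite /fill_from size_cat iotaD zip_cat ?size_iota // foldl_cat. Qed.

Lemma fill_from_W_invariant (T : Type) (f : seq (seq nat) -> T) ch k cols m n :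
  (forall j cs cs', appends_to j cs cs' -> f cs' = f cs) ->
  1 < m -> size cols <= size k -> f (fill_from ch k cols m (nseq n false)) = f cols.
Proof.
move=> f_inv; elim: n m cols => [|n IH] m cols // m_gt1 le_size.
have app := fill_step_W_appends ch (negbT (gtn_eqF m_gt1)) le_size.
by rewrite fill_from_cons IH ?(f_inv _ _ _ app) ?(appends_to_size app) // ltnW.
Qed.

Lemma top_ranks_fill_from_W ch k cols m n :
  1 < m -> size cols <= size k -> all (fun p => p < m) (top_preds cols) ->
  top_ranks (fill_from ch k cols m (nseq n false)) = top_ranks cols.
Proof.
elim: n m cols => [|n IH] m cols // m_gt1 le_size top_lt.
have app := fill_step_W_appends ch (negbT (gtn_eqF m_gt1)) le_size.
have m_top : m \notin top_preds cols.
  by apply/negP => /(allP top_lt); rewrite ltnn.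
have top_app : top_preds (fill_step ch k cols (m, false)) = top_preds cols.
  by have /(congr1 (map predn)) := appends_to_heads app; rewrite -!map_comp.
rewrite fill_from_cons IH ?(top_ranks_appends m_top app) ?(appends_to_size app) ?top_app //.
  exact: ltnW.
by apply: sub_all top_lt => p /ltnW.
Qed.

Lemma fill_from_W_choice_free ch1 ch2 k cols m n :
  (forall x, ch1 [:: x] = ch2 [:: x]) -> count (fun c => c != [::]) cols <= 1 ->
  1 < m -> size cols <= size k ->
  fill_from ch1 k cols m (nseq n false) = fill_from ch2 k cols m (nseq n false).
Proof.
move=> ch12; elim: n m cols => [|n IH] m cols // open1 m_gt1 le_size.
have app := fill_step_W_appends ch1 (negbT (gtn_eqF m_gt1)) le_size.
rewrite !fill_from_cons -(fill_step_W_choice_free m ch12) ?(leq_trans (size_active _ _)) //.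
by rewrite IH ?(appends_to_count_nonempty app) ?(appends_to_size app) // ltnW.
Qed.

Lemma count_id_eq0 s : count id s = 0 -> s = nseq (size s) false.
Proof. by elim: s => [|[] s IH] //= /IH {1}->. Qed.

Lemma count_id_eq1 s : count id s = 1 ->
  exists a b, s = nseq a false ++ true :: nseq b false.
Proof.
elim: s => [|[] s IH] //= [cnt].
  by exists 0, (size s); rewrite {1}(count_id_eq0 cnt).
by have [a [b ->]] := IH cnt; exists a.+1, b.
Qed.

Lemma kdyck_cons k w : 0 < size k -> is_kdyck k w ->
  exists2 v, w = true :: v & count id v = (size k).-1.
Proof.
move=> k_pos /and3P[_ /eqP cnt ranks].
case: w cnt ranks => [|[] v] /= cnt; first by rewrite -cnt in k_pos.
  by exists v; rewrite // -cnt.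
case: v cnt => [|b v] cnt; first by rewrite -cnt in k_pos.
by rewrite /start_ranks /=; case: ifP.
Qed.

Lemma first_row_rank_sum_fill_one_column ch k1 n :
  first_row_rank_sum (fill ch [:: k1] (true :: nseq n false)) = 0.
Proof.
by rewrite /first_row_rank_sum fill_fill_from fill_from_cons fill_step_S top_ranks_fill_from_W.
Qed.

Lemma first_row_rank_sum_fill_two_columns ch1 ch2 k1 k2 a b :
  (forall x, ch1 [:: x] = ch2 [:: x]) ->
  let w := true :: nseq a false ++ true :: nseq b false in
  first_row_rank_sum (fill ch1 [:: k1; k2] w) =
  first_row_rank_sum (fill ch2 [:: k1; k2] w).
Proof.
move=> ch12 w; set k := [:: k1; k2].
pose P ch := fill_from ch k [:: [:: 1]; [::]] 2 (nseq a false).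
have fillE ch :
    fill ch k w = fill_from ch k (place_top (P ch) (2 + a)) (2 + a).+1 (nseq b false).
  by rewrite fill_fill_from fill_from_cons fill_step_S fill_from_cat size_nseq
             fill_from_cons fill_step_S.
have P12 : P ch1 = P ch2 by apply: fill_from_W_choice_free.
have [c Pc c1] : exists2 c, P ch2 = [:: c; [::]] & head 0 c = 1.
  have heads_open j cs cs' : appends_to j cs cs' ->
      (map (head 0) cs', count (fun c => c != [::]) cs') =
      (map (head 0) cs, count (fun c => c != [::]) cs).
    by move=> app; rewrite (appends_to_heads app) (appends_to_count_nonempty app).
  have := @fill_from_W_invariant _ _ ch2 k [:: [:: 1]; [::]] 2 a heads_open isT isT.
  rewrite -/(P ch2); case: (P ch2) => [|[|x c] [|[|y c'] []]] //= [->].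
  by exists (1 :: c).
rewrite /first_row_rank_sum !fillE P12 Pc.
case: c Pc c1 => // x c Pc /= ->.
by rewrite !top_ranks_fill_from_W //= !addSn !ltnS leqnSn.
Qed.

Theorem proposition5p5 (k : seq nat) :
  all (fun x => 0 < x) k -> (size k == 1) || (size k == 2) ->
  (forall w : seq bool, is_kdyck k w -> depth k w = bounce k w) /\
  (forall (R : comNzRingType) (q t : R),
     (\sum_(w <- kdyck_paths k) q ^+ area k w * t ^+ depth k w =
      \sum_(w <- kdyck_paths k) q ^+ area k w * t ^+ bounce k w)%R).
Proof.
move=> _ size12.
have depth_bounce w : is_kdyck k w -> depth k w = bounce k w.
  have k_pos : 0 < size k by case/orP: size12 => /eqP ->.
  case/(kdyck_cons k_pos) => v -> cnt; rewrite /depth /bounce /eta /eta_star.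
  case/orP: size12 cnt; case: k {k_pos} => [|k1 [|k2 []]] // _ /= cnt.
    by rewrite (count_id_eq0 cnt) !first_row_rank_sum_fill_one_column.
  have [a [b ->]] := count_id_eq1 cnt.
  by apply: first_row_rank_sum_fill_two_columns => x; rewrite /min_seq /max_seq /= minnn maxn0.
split=> // R q t; apply: eq_big_seq => w; rewrite mem_filter => /andP[kw _].
by rewrite depth_bounce.
Qed.
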